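(* Let $G$ be an edge-magic 2-regular simple graph (in particular, an edge-magic bipartite 2-regular graph, i.e. a disjoint union of even cycles) and let $n\ge1$. Then $|\tau_{G\odot\overline{K}_n}|\ge (n+1)|\tau_G|+2$.
   Context: An edge-magic labeling of a $(p,q)$-graph $G$ (with $p$ vertices and $q$ edges) is a bijection $f:V(G)\cup E(G)\to[1,p+q]$ such that $f(x)+f(xy)+f(y)$ equals a constant $\mathrm{val}(f)$ (the valence) for every edge $xy$; $G$ is edge-magic if it has one. For a graph $H$, $\tau_H$ is the set of integers that are valences of edge-magic labelings of $H$. $G\odot\overline{K}_n$ (the corona, or crown when $G$ is a cycle) is the graph obtained from $G$ by attaching $n$ new pendant vertices to each vertex of $G$. *)

From mathcomp Require Import all_boot.
Set Implicit Arguments. Unset Strict Implicit. Unset Printing Implicit Defensive.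

Record sgraph := SGraph {
  gV :> finType;
  gadj : rel gV;
  gsym : symmetric gadj;
  girr : irreflexive gadj }.

Definition is_edge (G : sgraph) (s : {set G}) : bool :=
  [exists x : G, exists y : G, gadj x y && (s == [set x; y])].

Definition gE (G : sgraph) : finType := {s : {set G} | is_edge s}.

Definition order_size (G : sgraph) : nat := #|G| + #|gE G|.

Definition regular (G : sgraph) (r : nat) : Prop :=
  forall v : G, #|[set w : G | gadj v w]| = r.

(* An edge-magic labeling with valence k: a bijection
   f : V(G) + E(G) -> [1, p+q] (encoded as an injective map into
   'I_(p+q+1) avoiding 0; since |V+E| = p+q this is a bijection onto [1,p+q])
   with f(x) + f(xy) + f(y) = k for every edge xy. *)
Definition is_em_labeling (G : sgraph)
    (f : {ffun (G + gE G)%type -> 'I_(order_size G).+1}) (k : nat) : bool :=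
  [&& injectiveb f,
      [forall d, 0 < f d] &
      [forall ed : gE G, forall x : G, forall y : G,
         (gadj x y && (val ed == [set x; y])) ==>
         (f (inl x) + f (inr ed) + f (inl y) == k)]].

Definition is_valence (G : sgraph) (k : nat) : bool :=
  [exists f, @is_em_labeling G f k].

Definition edge_magic (G : sgraph) : Prop := exists k, is_valence G k.

(* tau_G : the set of valences.  When G has at least one edge every valence
   is at most 3(p+q), so tau_G is exactly this finite list. *)
Definition tau (G : sgraph) : seq nat :=
  [seq k <- iota 0 (3 * order_size G).+1 | is_valence G k].

(* The corona G (.) \overline{K}_n: vertices V + V x 'I_n, the copies (v,i)
   being pendant vertices attached to v. *)
Definition corona_adj (G : sgraph) (n : nat) : rel (G + (G * 'I_n))%type :=
  fun a b => match a, b with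
  | inl x, inl y => gadj x y
  | inl x, inr (y, _) => x == y
  | inr (x, _), inl y => x == y
  | inr _, inr _ => false
  end.

Lemma corona_sym (G : sgraph) n : symmetric (@corona_adj G n).
Proof.
case=> [x|[x i]] [y|[y j]] //=; try exact: gsym; exact: eq_sym.
Qed.

Lemma corona_irr (G : sgraph) n : irreflexive (@corona_adj G n).
Proof. by case=> [x|[x i]] //=; exact: girr. Qed.

Definition corona (G : sgraph) (n : nat) : sgraph :=
  @SGraph (G + (G * 'I_n))%type (@corona_adj G n) (@corona_sym G n) (@corona_irr G n).

(* Let G be 2-regular with p > 0 vertices, so q = p and s := p + q = 2p.
   1. Orienting every cycle of G gives a permutation succ of V(G) with
      v ~ succ v such that v |-> {v, succ v} is a bijection V(G) -> E(G).
      Consequently every valence k of G satisfies s + 3 <= k <= 2s.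
   2. Fix a layer a in 0..n.  The map sending a vertex v to (a, v), a pendant
      vertex (v, i) to (lift a i, succ v), an edge of G to (n - a, e) and the
      pendant edge at (v, i) to (n - lift a i, {v, succ v}) is an injection of
      V + E of the corona into 'I_(n+1) x (V(G) + E(G)); along every corona
      edge the layers add up to n + a and the second components form an edge
      triple of G.  Composing an edge-magic labeling f of valence k with the
      layered labels (c, t) |-> (n+1) t - c or (c, t) |-> s c + t yields
      edge-magic labelings of the corona with valences (n+1) k - (n + a) and
      s (n + a) + k.
   3. For valences in [s+3, 2s] the n+1 values (n+1) k - (n + a) are distinct
      for distinct (k, a), and s n + min tau_G and 2 s n + max tau_G lie
      below, resp. above, all of them; counting gives the theorem. *)

From mathcomp Require Import all_boot zify.
Set Implicit Arguments. Unset Strict Implicit. Unset Printing Implicit Defensive.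

Lemma set2_cases (T : finType) (x y x' y' : T) :
  [set x; y] = [set x'; y'] -> (x = x' /\ y = y') \/ (x = y' /\ y = x').
Proof.
move=> e.
have hx : x \in [set x'; y'] by rewrite -e set21.
have hy : y \in [set x'; y'] by rewrite -e set22.
have hx' : x' \in [set x; y] by rewrite e set21.
have hy' : y' \in [set x; y] by rewrite e set22.
move: hx hy hx' hy'; rewrite !in_set2.
by do 4 case/orP=> /eqP ?; subst; auto.
Qed.

Lemma edge_ends (G : sgraph) (ed : gE G) :
  exists x y, gadj x y /\ val ed = [set x; y].
Proof.
by case: ed => s /= /existsP [x /existsP [y /andP [h /eqP e]]]; exists x, y.
Qed.

Section EdgeMagicLabelings.
Variables (G : sgraph) (f : {ffun (G + gE G)%type -> 'I_(order_size G).+1}).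
Variable k : nat.
Hypothesis hf : is_em_labeling f k.

Lemma em_inj : injective f.
Proof. by case/and3P: hf => /injectiveP. Qed.

Lemma em_pos z : 0 < f z.
Proof. by case/and3P: hf => _ /forallP. Qed.

Lemma em_edge (ed : gE G) (x y : G) :
  gadj x y -> val ed = [set x; y] -> f (inl x) + f (inr ed) + f (inl y) = k.
Proof.
case/and3P: hf => _ _ /forallP /(_ ed) /forallP /(_ x) /forallP /(_ y).
by move=> h hxy he; move: h; rewrite hxy he eqxx => /eqP.
Qed.

Lemma em_range z : 0 < f z <= order_size G.
Proof. by rewrite em_pos -ltnS ltn_ord. Qed.

Lemma em_onto (i : 'I_(order_size G).+1) : i != ord0 -> exists z, f z = i.
Proof.
move=> hi; set A := [set f z | z in predT].
have cA : #|A| = order_size G by rewrite card_imset ?card_sum //; exact: em_inj.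
have cC := cardsC A; rewrite cA card_ord in cC.
have [/imsetP [z _ ->]|hn] := boolP (i \in A); first by exists z.
have : [set ord0; i] \subset ~: A.
  apply/subsetP => j; rewrite in_set2 inE => /orP [] /eqP -> //.
  by apply/imsetP => -[z _ ez]; have := em_pos z; rewrite -ez.
move/subset_leq_card; rewrite cards2 eq_sym hi; lia.
Qed.

End EdgeMagicLabelings.

(* Walking along a cycle is a permutation
   [step] of the darts (ordered adjacent pairs); a dart and its reverse lie in
   different [step]-orbits, so comparing the two orbits orients every cycle. *)
Section TwoRegular.
Variable G : sgraph.
Hypothesis hreg : regular G 2.

Definition other_nb (w v : G) : G := odflt v [pick u | gadj w u && (u != v)].

Lemma other_nbP (w v : G) : gadj w v ->
  [/\ gadj w (other_nb w v), other_nb w v != v &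
      forall u, gadj w u -> u = v \/ u = other_nb w v].
Proof.
move=> hwv; have /eqP/cards2P [x [y [hxy hA]]] := hreg w.
have mem u : gadj w u = (u \in [set x; y]) by rewrite -hA inE.
have hv : (v == x) || (v == y) by rewrite -in_set2 -mem.
rewrite /other_nb; case: pickP => [u /andP [hu huv] | hn]; last first.
  exfalso; case/orP: hv => /eqP hv.
  - by have := hn y; rewrite mem in_set2 eqxx orbT hv eq_sym hxy.
  - by have := hn x; rewrite mem in_set2 eqxx /= hv hxy.
split=> // u' hu'; move: hu hu'; rewrite !mem !in_set2.
case/orP: hv => /eqP ev; case/orP=> /eqP eu; case/orP=> /eqP eu'; subst;
  first [ by left | by right | by move: huv; rewrite eqxx ].
Qed.

Lemma other_nbK (w v : G) : gadj w v -> other_nb w (other_nb w v) = v.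
Proof.
move=> hwv; have [h1 _ h3] := other_nbP hwv.
have [h1' h2' _] := other_nbP h1.
by case: (h3 _ h1') => // e; rewrite e eqxx in h2'.
Qed.

Lemma exists_nb (v : G) : exists u, gadj v u.
Proof.
have /eqP/cards2P [x [y [_ hA]]] := hreg v.
by exists x; move: (set21 x y); rewrite -hA inE.
Qed.

Definition step (d : G * G) : G * G :=
  if gadj d.1 d.2 then (d.2, other_nb d.2 d.1) else d.

Definition flip (d : G * G) : G * G := (d.2, d.1).

Lemma step_adj (d : G * G) : gadj d.1 d.2 -> gadj (step d).1 (step d).2.
Proof.
move=> h; rewrite /step h /=.
by have [] := other_nbP (_ : gadj d.2 d.1); rewrite // gsym.
Qed.

Lemma iter_step_adj (d : G * G) i :
  gadj d.1 d.2 -> gadj (iter i step d).1 (iter i step d).2.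
Proof. by move=> h; elim: i => //= i IH; apply: step_adj. Qed.

Lemma step_inj : injective step.
Proof.
move=> [a b] [a' b']; rewrite /step /=.
have [hab|hab] := boolP (gadj a b); have [hab'|hab'] := boolP (gadj a' b') => //.
- case=> eb eo; subst b'; rewrite gsym in hab; rewrite gsym in hab'.
  have [_ _ h3] := other_nbP hab; have [_ n2 _] := other_nbP hab'.
  by case: (h3 _ hab') => [->//|e]; rewrite -eo e eqxx in n2.
- case=> e1 e2; subst a' b'; rewrite gsym in hab.
  by have [h1 _ _] := other_nbP hab; rewrite h1 in hab'.
- case=> e1 e2; subst a b; rewrite gsym in hab'.
  by have [h1 _ _] := other_nbP hab'; rewrite h1 in hab.
Qed.

Lemma iter_step_inj i : injective (iter i step).
Proof. by elim: i => [//|i IH] x y /= /step_inj; exact: IH. Qed.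

Lemma step_flip (d : G * G) : gadj d.1 d.2 -> step (flip (step d)) = flip d.
Proof.
case: d => a b /= hab; have hba : gadj b a by rewrite gsym.
have [h1 _ _] := other_nbP hba.
by rewrite /step /= hab /= gsym h1 /= other_nbK.
Qed.

Lemma iter_step_flip (d : G * G) i :
  gadj d.1 d.2 -> iter i step (flip (iter i step d)) = flip d.
Proof.
move=> h; elim: i => // i IH.
by rewrite iterSr /= step_flip ?IH //; exact: iter_step_adj.
Qed.

(* No dart is connected to its reverse: otherwise the middle dart of the walk
   would be its own reverse (a loop) or be followed by its reverse (a vertex
   with a single neighbour). *)
Lemma flip_not_connected (d : G * G) :
  gadj d.1 d.2 -> ~~ fconnect step d (flip d).
Proof.
move=> h; apply/negP => /iter_findex; set t := findex _ _ _ => ht.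
have mirror i : i <= t -> flip (iter i step d) = iter (t - i) step d.
  by move=> hi; apply: (@iter_step_inj i); rewrite iter_step_flip // -iterD subnKC.
have ht2 := odd_double_half t; set j := t./2 in ht2.
have := mirror j ltac:(lia); have := iter_step_adj j h.
have [ho|ho] := boolP (odd t).
- have -> : (t - j = j.+1)%N by move: ht2; rewrite ho; lia.
  rewrite iterS; case: (iter j step d) => x y /= hxy.
  rewrite /flip /step /= hxy => -[e]; rewrite gsym in hxy.
  by have [_ n2 _] := other_nbP hxy; rewrite -e eqxx in n2.
- have -> : (t - j = j)%N by move: ht2; rewrite (negbTE ho); lia.
  case: (iter j step d) => x y /= hxy.
  by rewrite /flip /= => -[e _]; subst y; rewrite girr in hxy.
Qed.

Definition orbit_id (d : G * G) : nat := enum_rank (froot step d).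

Definition forward (d : G * G) : bool :=
  gadj d.1 d.2 && (orbit_id d < orbit_id (flip d)).

Lemma orbit_id_step (d : G * G) : orbit_id (step d) = orbit_id d.
Proof.
rewrite /orbit_id; congr (nat_of_ord (enum_rank _)); symmetry.
by apply/(rootP (fconnect_sym step_inj)); exact: fconnect1.
Qed.

Lemma orbit_id_flip (d : G * G) : gadj d.1 d.2 -> orbit_id d != orbit_id (flip d).
Proof.
move=> h; apply/negP => /eqP /val_inj /enum_rank_inj.
by move/(rootP (fconnect_sym step_inj)); apply/negP; exact: flip_not_connected.
Qed.

Lemma forward_flip (d : G * G) : gadj d.1 d.2 -> forward (flip d) = ~~ forward d.
Proof.
move=> h; have := orbit_id_flip h; rewrite /forward /= gsym h.
by case: d h => a b /= _; rewrite /flip /=; lia.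
Qed.

Lemma forward_other (v a : G) :
  gadj v a -> forward (v, other_nb v a) = ~~ forward (v, a).
Proof.
move=> h; have [h1 _ _] := other_nbP h.
have e1 : orbit_id (v, other_nb v a) = orbit_id (a, v).
  by rewrite -[RHS]orbit_id_step /step /= gsym h.
have e2 : orbit_id (other_nb v a, v) = orbit_id (v, a).
  by rewrite -[LHS]orbit_id_step /step /= gsym h1 other_nbK.
have := orbit_id_flip (h : gadj (v, a).1 (v, a).2).
by rewrite /forward /flip /= h h1 e1 e2; lia.
Qed.

Definition succ (v : G) : G := odflt v [pick u | forward (v, u)].

Lemma succ_forward (v : G) : forward (v, succ v).
Proof.
rewrite /succ; case: pickP => // hn; have [u hu] := exists_nb v.
by have := hn (other_nb v u); rewrite forward_other // hn.
Qed.

Lemma succ_adj (v : G) : gadj v (succ v).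
Proof. by have /andP [] := succ_forward v. Qed.

Lemma forward_succ (v w : G) : forward (v, w) -> w = succ v.
Proof.
move=> hw; have /andP [/= hvw _] := hw; have [_ _ h3] := other_nbP hvw.
case: (h3 _ (succ_adj v)) => [->//|e].
by have := succ_forward v; rewrite e forward_other // hw.
Qed.

Lemma succ_neq (v : G) : succ v != v.
Proof. by apply/eqP => e; have := succ_adj v; rewrite e girr. Qed.

Lemma succ_inj : injective succ.
Proof.
move=> v v' e; apply/eqP/negP => /negP hne; set w := succ v in e.
have h1 : forward (v, w) := succ_forward v.
have h2 : forward (v', w) by rewrite e; exact: succ_forward.
have hwv : gadj w v by rewrite gsym; case/andP: h1.
have hwv' : gadj w v' by rewrite gsym; case/andP: h2.
have [_ _ h3] := other_nbP hwv.
have back u : forward (u, w) -> forward (w, u) = false.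
  by move=> hu; rewrite -[(w, u)]/(flip (u, w)) forward_flip ?hu //; case/andP: hu.
case: (h3 _ hwv') => e'; first by rewrite e' eqxx in hne.
by have := back _ h2; rewrite e' forward_other // back.
Qed.

Lemma is_edge_succ (v : G) : is_edge [set v; succ v].
Proof. by apply/existsP; exists v; apply/existsP; exists (succ v); rewrite succ_adj eqxx. Qed.

Definition out_edge (v : G) : gE G := exist _ [set v; succ v] (is_edge_succ v).

Definition edge_of (a b : G) : gE G :=
  if forward (a, b) then out_edge a else out_edge b.

Lemma val_edge_of (a b : G) : gadj a b -> val (edge_of a b) = [set a; b].
Proof.
move=> h; rewrite /edge_of; case: ifP => hf /=; first by rewrite -(forward_succ hf).
have hba : forward (b, a) by rewrite -[(b, a)]/(flip (a, b)) forward_flip ?hf.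
by rewrite -(forward_succ hba) setUC.
Qed.

(* Distinct vertices have distinct out-edges: {v, succ v} = {succ v, v} with
   v = succ (succ v) would make both darts between v and succ v forward. *)
Lemma out_edge_inj : injective out_edge.
Proof.
move=> v v' /(congr1 val) /= /set2_cases [[]//|[e1 e2]].
have h1 := succ_forward v; have h2 := succ_forward v'; rewrite -e1 -e2 in h2.
move: h2; rewrite -[(succ v, v)]/(flip (v, succ v)) forward_flip ?h1 //.
exact: succ_adj.
Qed.

Lemma out_edge_onto (e : gE G) : exists v, e = out_edge v.
Proof.
have [x [y [hxy he]]] := edge_ends e; exists (if forward (x, y) then x else y).
by apply: val_inj; rewrite he -(val_edge_of hxy) /edge_of; case: ifP.
Qed.

Lemma card_gE : #|gE G| = #|G|.
Proof.
apply/eqP; rewrite eqn_leq (leq_card _ out_edge_inj) andbT.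
rewrite -(card_codom out_edge_inj); apply/subset_leq_card/subsetP => e _.
by have [v ->] := out_edge_onto e; exact: codom_f.
Qed.

Lemma triple_cover (z : G + gE G) : exists v, z = inl v \/ z = inr (out_edge v).
Proof.
case: z => [v|e]; first by exists v; left.
by have [v ->] := out_edge_onto e; exists v; right.
Qed.

Section OutEdgeTriples.
Variables (f : {ffun (G + gE G)%type -> 'I_(order_size G).+1}) (k : nat).
Hypothesis hf : is_em_labeling f k.

Lemma em_out_edge (v : G) : f (inl v) + f (inr (out_edge v)) + f (inl (succ v)) = k.
Proof. exact: (em_edge hf (ed := out_edge v) (succ_adj v)). Qed.

Lemma out_triple_uniq (v : G) :
  [/\ f (inl v) != f (inr (out_edge v)) :> nat,
      f (inl v) != f (inl (succ v)) :> nat &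
      f (inr (out_edge v)) != f (inl (succ v)) :> nat].
Proof.
have lab_neq z z' : z != z' -> f z != f z' :> nat.
  by move=> h; apply: contra h => /eqP /val_inj /(em_inj hf) ->.
split; rewrite ?lab_neq //.
by rewrite eq_sym; apply/eqP => -[]; apply/eqP; exact: succ_neq.
Qed.

Lemma label_in_out_triple i : 0 < i <= order_size G -> exists v,
  [|| f (inl v) == i :> nat, f (inr (out_edge v)) == i :> nat
    | f (inl (succ v)) == i :> nat].
Proof.
move=> hi; have [|z hz] := em_onto hf (i := inord i).
  by rewrite -val_eqE /= inordK //; lia.
have -> : i = f z by rewrite hz inordK //; lia.
by have [v [->|->]] := triple_cover z; exists v; rewrite eqxx ?orbT.
Qed.

(* Valences of a 2-regular graph lie in [s+3, 2s], s = p+q: the labels s and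
   1 each occur in a triple of three distinct labels from [1, s]. *)
Lemma valence_bounds : 0 < #|G| -> order_size G + 3 <= k <= 2 * order_size G.
Proof.
move=> hp; have hs : 0 < order_size G by rewrite /order_size; lia.
have [v hv] := label_in_out_triple (i := order_size G) ltac:(lia).
have [w hw] := label_in_out_triple (i := 1) ltac:(lia).
have := em_out_edge v; have [? ? ?] := out_triple_uniq v.
have := em_out_edge w; have [? ? ?] := out_triple_uniq w.
have := em_range hf (inl v); have := em_range hf (inr (out_edge v)).
have := em_range hf (inl (succ v)); have := em_range hf (inl w).
have := em_range hf (inr (out_edge w)); have := em_range hf (inl (succ w)).
lia.
Qed.

End OutEdgeTriples.
End TwoRegular.

Section LayeredLabels.
Variables (s n : nat).

Definition layer_label (sc : bool) (c t : nat) : nat :=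
  if sc then n.+1 * t - c else s * c + t.

Definition layer_valence (sc : bool) (a k : nat) : nat :=
  if sc then n.+1 * k - (n + a) else s * (n + a) + k.

Lemma layer_label_sum sc a k c1 c2 c3 t1 t2 t3 :
  c1 + c2 + c3 = n + a -> t1 + t2 + t3 = k -> c1 <= n -> c2 <= n -> c3 <= n ->
  0 < t1 -> 0 < t2 -> 0 < t3 ->
  layer_label sc c1 t1 + layer_label sc c2 t2 + layer_label sc c3 t3 =
  layer_valence sc a k.
Proof.
move=> hc ht h1 h2 h3 p1 p2 p3; rewrite /layer_label /layer_valence.
case: sc; last by rewrite -ht -hc !mulnDr; lia.
have q1 : n.+1 <= n.+1 * t1 by rewrite leq_pmulr.
have q2 : n.+1 <= n.+1 * t2 by rewrite leq_pmulr.
have q3 : n.+1 <= n.+1 * t3 by rewrite leq_pmulr.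
rewrite -ht !mulnDr; lia.
Qed.

Lemma layer_label_range sc c t : c <= n -> 0 < t <= s ->
  0 < layer_label sc c t <= n.+1 * s.
Proof.
move=> hc /andP [ht hts]; rewrite /layer_label; case: sc.
- have q1 : n.+1 <= n.+1 * t by rewrite leq_pmulr.
  have q2 : n.+1 * t <= n.+1 * s by rewrite leq_mul2l hts orbT.
  lia.
- have q : s * c <= s * n by rewrite leq_mul2l hc orbT.
  rewrite mulSn; lia.
Qed.

Lemma layer_label_inj sc c t c' t' : c <= n -> c' <= n -> 0 < t <= s -> 0 < t' <= s ->
  layer_label sc c t = layer_label sc c' t' -> c = c' /\ t = t'.
Proof.
move=> hc hc' /andP [ht hts] /andP [ht' hts']; rewrite /layer_label; case: sc => e.
- have [lt|gt|eq] := ltngtP t t'.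
  + have : n.+1 * t.+1 <= n.+1 * t' by rewrite leq_mul2l lt orbT.
    rewrite mulnS; lia.
  + have : n.+1 * t'.+1 <= n.+1 * t by rewrite leq_mul2l gt orbT.
    rewrite mulnS; lia.
  + subst t'; have : n.+1 <= n.+1 * t by rewrite leq_pmulr.
    lia.
- have [lt|gt|eq] := ltngtP c c'.
  + have : s * c.+1 <= s * c' by rewrite leq_mul2l lt orbT.
    rewrite mulnS; lia.
  + have : s * c'.+1 <= s * c by rewrite leq_mul2l gt orbT.
    rewrite mulnS; lia.
  + by subst c'; lia.
Qed.

Lemma interleaved_valence_inj k k' a a' : 2 <= k -> 2 <= k' -> a <= n -> a' <= n ->
  layer_valence true a k = layer_valence true a' k' -> k = k' /\ a = a'.
Proof.
rewrite /layer_valence => hk hk' ha ha' e.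
have q1 : n.+1 * 2 <= n.+1 * k by rewrite leq_mul2l hk orbT.
have q2 : n.+1 * 2 <= n.+1 * k' by rewrite leq_mul2l hk' orbT.
have [lt|gt|eq] := ltngtP k k'.
- have : n.+1 * k.+1 <= n.+1 * k' by rewrite leq_mul2l lt orbT.
  rewrite mulnS; lia.
- have : n.+1 * k'.+1 <= n.+1 * k by rewrite leq_mul2l gt orbT.
  rewrite mulnS; lia.
- subst k'; lia.
Qed.

Lemma stacked_valence_below k kmin a : 1 <= n -> kmin <= k -> s + 3 <= k -> a <= n ->
  layer_valence false 0 kmin < layer_valence true a k.
Proof.
rewrite /layer_valence => hn hk hs ha.
have : n * (s + 3) <= n * k by rewrite leq_mul2l hs orbT.
rewrite mulSn mulnDr addn0 (mulnC s n); lia.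
Qed.

Lemma stacked_valence_above k kmax a : 1 <= n -> 3 <= k -> k <= kmax -> k <= 2 * s ->
  layer_valence true a k < layer_valence false n kmax.
Proof.
rewrite /layer_valence => hn h3 hk hs.
have : n * k <= n * (2 * s) by rewrite leq_mul2l hs orbT.
rewrite mulSn; lia.
Qed.

End LayeredLabels.

Section CoronaCoordinates.
Variables (G : sgraph) (n : nat).
Hypothesis hreg : regular G 2.
Variable a : 'I_n.+1.

Notation coords := ('I_n.+1 * (G + gE G))%type.

Definition vertex_coord (x : corona G n) : coords :=
  match x with
  | inl v => (a, inl v)
  | inr (v, i) => (lift a i, inl (succ v))
  end.

Definition edge_coord (x y : corona G n) : coords :=
  match x, y with
  | inl u, inl w => (rev_ord a, inr (edge_of hreg u w))
  | inl _, inr (v, i) | inr (v, i), inl _ => (rev_ord (lift a i), inr (out_edge hreg v))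
  | inr (v, _), inr _ => (a, inl v) (* never an edge *)
  end.

Definition coord (z : corona G n + gE (corona G n)) : option coords :=
  match z with
  | inl x => Some (vertex_coord x)
  | inr ed => omap (fun xy : corona G n * corona G n => edge_coord xy.1 xy.2)
      [pick xy | gadj xy.1 xy.2 && (val ed == [set xy.1; xy.2])]
  end.

Lemma edge_coord_sym (x y : corona G n) : gadj x y -> edge_coord x y = edge_coord y x.
Proof.
case: x => [u|[v i]]; case: y => [w|[v' i']] h; [|reflexivity|reflexivity|by []].
congr (_, inr _); apply: val_inj.
by rewrite val_edge_of // val_edge_of 1?setUC // gsym.
Qed.

Lemma coord_edge (ed : gE (corona G n)) (x y : corona G n) :
  gadj x y -> val ed = [set x; y] -> coord (inr ed) = Some (edge_coord x y).
Proof.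
move=> hxy he; rewrite /coord; case: pickP => [[x' y'] /andP [h' /eqP e'] | hn].
  by rewrite he in e'; case: (set2_cases e') => -[-> ->] //=; rewrite edge_coord_sym.
by have := hn (x, y); rewrite hxy he eqxx.
Qed.

Lemma coord_some z : exists p, coord z = Some p.
Proof.
case: z => [x|ed]; first by exists (vertex_coord x).
have [x [y [h e]]] := edge_ends ed.
by exists (edge_coord x y); apply: coord_edge h e.
Qed.

(* Distinct vertices get distinct coordinates, as lift a is injective and
   avoids a, and succ is injective. *)
Lemma vertex_coord_inj : injective vertex_coord.
Proof.
case=> [v|[v i]] [v'|[v' i']] [].
- by move=> ->.
- by move=> e; have := neq_lift a i'; rewrite -e eqxx.
- by move=> e; have := neq_lift a i; rewrite e eqxx.
- move=> e /(succ_inj hreg) ->; have e' : lift a i = lift a i' by apply: val_inj.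
  by rewrite (lift_inj e').
Qed.

Lemma corona_adj_cases (x y : corona G n) : gadj x y ->
  (exists u w, [/\ x = inl u, y = inl w & gadj u w]) \/
  (exists v i, [set x; y] = [set inl v; inr (v, i)] /\
      edge_coord x y = (rev_ord (lift a i), inr (out_edge hreg v))).
Proof.
case: x => [u|[v i]]; case: y => [w|[v' i']] //= h.
- by left; exists u, w.
- by right; exists v', i'; move/eqP: h => ->.
- by right; exists v, i; move/eqP: h => ->; rewrite setUC.
Qed.

Lemma edge_coord_inj (x y x' y' : corona G n) : gadj x y -> gadj x' y' ->
  edge_coord x y = edge_coord x' y' -> [set x; y] = [set x'; y'].
Proof.
move=> h h'.
case: (corona_adj_cases h) => [[u [w [-> -> huw]]]|[v [i [-> ->]]]];
case: (corona_adj_cases h') => [[u' [w' [-> -> huw']]]|[v' [i' [-> ->]]]].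
- move=> [] /(congr1 val); rewrite !val_edge_of //.
  by case/set2_cases => -[-> ->]; rewrite // setUC.
- by move=> /(congr1 fst) /rev_ord_inj e; have := neq_lift a i'; rewrite -e eqxx.
- by move=> /(congr1 fst) /rev_ord_inj e; have := neq_lift a i; rewrite e eqxx.
- move=> e; move: (congr1 fst e) (congr1 snd e) => /= /rev_ord_inj /lift_inj -> [].
  move=> hs; have /out_edge_inj -> // : out_edge hreg v = out_edge hreg v'.
  exact: val_inj.
Qed.

Lemma edge_coord_edge (x y : corona G n) : gadj x y -> exists e, (edge_coord x y).2 = inr e.
Proof. by case: x => [u|[v i]]; case: y => [w|[v' i']] //=; eexists. Qed.

Lemma coord_inj z z' p : coord z = Some p -> coord z' = Some p -> z = z'.
Proof.
have rep ed : exists x y, [/\ gadj x y, val ed = [set x; y] &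
    coord (inr ed) = Some (edge_coord x y)].
  have [x [y [h e]]] := edge_ends ed; exists x, y; split => //; exact: coord_edge.
case: z => [x|ed]; case: z' => [x'|ed'].
- by move=> [<-] /Some_inj /vertex_coord_inj ->.
- have [x1 [y1 [h1 _ ->]]] := rep ed' => -[<-] /Some_inj /(congr1 snd).
  by have [e1 ->] := edge_coord_edge h1; case: x => [?|[? ?]].
- have [x1 [y1 [h1 _ ->]]] := rep ed => /Some_inj <- /Some_inj /(congr1 snd).
  by have [e1 ->] := edge_coord_edge h1; case: x' => [?|[? ?]].
- have [x1 [y1 [h1 e1 ->]]] := rep ed; have [x2 [y2 [h2 e2 ->]]] := rep ed'.
  move=> /Some_inj <- /Some_inj /(edge_coord_inj h2 h1) e.
  by congr inr; apply: val_inj; rewrite e1 e2 e.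
Qed.

End CoronaCoordinates.

Section CoronaLabeling.
Variables (G : sgraph) (n : nat).
Hypothesis hreg : regular G 2.
Variables (a : 'I_n.+1) (sc : bool).
Variables (f : {ffun (G + gE G)%type -> 'I_(order_size G).+1}) (k : nat).
Hypothesis hf : is_em_labeling f k.

Definition coord_label (p : 'I_n.+1 * (G + gE G)) : nat :=
  layer_label (order_size G) n sc p.1 (f p.2).

Definition corona_labeling :
    {ffun (corona G n + gE (corona G n))%type -> 'I_(order_size (corona G n)).+1} :=
  [ffun z => inord (if coord hreg a z is Some p then coord_label p else 0)].

Lemma coord_label_range p : 0 < coord_label p <= n.+1 * order_size G.
Proof.
apply: layer_label_range; last exact: (em_range hf p.2).
by rewrite -ltnS.
Qed.

(* Along each corona edge the layers sum to n + a and the G-labels form an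
   edge triple of f, so every edge sum is the same. *)
Lemma coord_triple_pendant (v : G) (i : 'I_n) :
  coord_label (vertex_coord a (inl v)) +
  coord_label (edge_coord hreg a (inl v) (inr (v, i))) +
  coord_label (vertex_coord a (inr (v, i))) = layer_valence (order_size G) n sc a k.
Proof.
have ha : a <= n by rewrite -ltnS.
have hi : bump a i <= n by rewrite -ltnS (ltn_ord (lift a i)).
rewrite /coord_label /=; have pos := em_pos hf.
apply: (layer_label_sum _ _ _ (em_out_edge hreg hf v) _ _ _ (pos _) (pos _) (pos _)); lia.
Qed.

Lemma coord_triple (x y : corona G n) : gadj x y ->
  coord_label (vertex_coord a x) + coord_label (edge_coord hreg a x y) +
  coord_label (vertex_coord a y) = layer_valence (order_size G) n sc a k.
Proof.
case: x => [u|[v i]]; case: y => [w|[v' i']] h.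
- have huw : gadj u w := h; have ha : a <= n by rewrite -ltnS.
  rewrite /coord_label /=; have pos := em_pos hf.
  have ek := em_edge hf huw (val_edge_of hreg huw).
  apply: (layer_label_sum _ _ _ ek _ _ _ (pos _) (pos _) (pos _)); lia.
- by have /eqP <- : u == v' := h; exact: coord_triple_pendant.
- have /eqP <- : v == w := h; have hv : gadj (inl v : corona G n) (inr (v, i)) := eqxx v.
  have := coord_triple_pendant v i; rewrite (edge_coord_sym hreg a hv) => <-.
  by rewrite addnC addnCA addnC.
- by [].
Qed.

(* When the corona has at least (n+1)s elements, the induced labeling is
   edge-magic: it is injective because coordinates and layered labels are. *)
Lemma corona_labeling_em : n.+1 * order_size G <= order_size (corona G n) ->
  is_em_labeling corona_labeling (layer_valence (order_size G) n sc a k).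
Proof.
move=> hN.
have labv z : exists p, coord hreg a z = Some p /\ corona_labeling z = coord_label p :> nat.
  have [p hp] := coord_some hreg a z; exists p; split => //.
  rewrite ffunE hp inordK // ltnS.
  by have /andP [_ h] := coord_label_range p; apply: leq_trans hN.
apply/and3P; split.
- apply/injectiveP => z z' /(congr1 val) /=.
  have [[c w] [hp ->]] := labv z; have [[c' w'] [hp' ->]] := labv z'.
  have le_n (b : 'I_n.+1) : b <= n by rewrite -ltnS.
  rewrite /coord_label /=.
  move/(layer_label_inj (le_n c) (le_n c') (em_range hf w) (em_range hf w')).
  move=> [/val_inj ec /val_inj /(em_inj hf) ew].
  by apply: (coord_inj hp); rewrite hp' ec ew.
- apply/forallP => z; have [p [_ ->]] := labv z.
  by have /andP [] := coord_label_range p.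
- apply/forallP => ed; apply/forallP => x; apply/forallP => y.
  apply/implyP => /andP [hxy /eqP he].
  have [p1 [hp1 ->]] := labv (inl x); have [p2 [hp2 ->]] := labv (inr ed).
  have [p3 [hp3 ->]] := labv (inl y); rewrite (coord_edge hreg a hxy he) in hp2.
  case: hp1 => <-; case: hp2 => <-; case: hp3 => <-.
  by rewrite coord_triple.
Qed.

End CoronaLabeling.

(* The corona has at least (n+1)(p+q) elements: besides its (n+1)p vertices
   it has an edge {v, succ v} for each vertex v and a pendant edge for each
   pendant vertex. *)
Section CoronaSize.
Variables (G : sgraph) (n : nat).
Hypothesis hreg : regular G 2.

Lemma is_edge_lifted (v : G) : is_edge (G := corona G n) [set inl v; inl (succ v)].
Proof.
apply/existsP; exists (inl v); apply/existsP; exists (inl (succ v)).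
by rewrite eqxx andbT; exact: succ_adj.
Qed.

Lemma is_edge_pendant (v : G) (i : 'I_n) : is_edge (G := corona G n) [set inl v; inr (v, i)].
Proof.
apply/existsP; exists (inl v); apply/existsP; exists (inr (v, i)).
by rewrite eqxx andbT; exact: eqxx.
Qed.

Definition corona_edge (z : G + G * 'I_n) : gE (corona G n) :=
  match z with
  | inl v => exist _ [set inl v; inl (succ v)] (is_edge_lifted v)
  | inr (v, i) => exist _ [set inl v; inr (v, i)] (is_edge_pendant v i)
  end.

Lemma corona_edge_inj : injective corona_edge.
Proof.
case=> [v|[v i]] [v'|[v' i']] /(congr1 val) /= /set2_cases.
- case=> [[[->] _]//|[[e1] [e2]]]; congr inl; apply: (out_edge_inj (hreg := hreg)).
  by apply: val_inj; rewrite /= e2 -e1 setUC.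
- by case=> [[_ ]|[ ]].
- by case=> [[_ ]|[ ]].
- by case=> [[[->] [->]]|[ ]].
Qed.

Lemma order_corona : n.+1 * order_size G <= order_size (corona G n).
Proof.
have hV : #|corona G n| = #|G| + #|G| * n.
  by rewrite [LHS]card_sum card_prod card_ord.
have := leq_card _ corona_edge_inj; rewrite card_sum card_prod card_ord.
by rewrite /order_size (card_gE hreg) hV; lia.
Qed.

End CoronaSize.

Lemma tau_uniq (G : sgraph) : uniq (tau G).
Proof. by rewrite filter_uniq // iota_uniq. Qed.

Lemma tau_bounds (G : sgraph) k : regular G 2 -> 0 < #|G| -> k \in tau G ->
  order_size G + 3 <= k <= 2 * order_size G.
Proof.
move=> hreg hp; rewrite mem_filter => /andP [/existsP [f hf] _].
exact: (valence_bounds hreg hf hp).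
Qed.

Lemma valence_in_tau (G : sgraph) k : regular G 2 -> 0 < #|G| -> is_valence G k ->
  k \in tau G.
Proof.
move=> hreg hp hk; rewrite mem_filter hk mem_iota /= add0n ltnS.
case/existsP: hk => f hf.
by have /andP [_ h] := valence_bounds hreg hf hp; lia.
Qed.

Lemma corona_valence_in_tau (G : sgraph) (n : nat) sc a k :
  regular G 2 -> 0 < #|G| -> a <= n -> k \in tau G ->
  layer_valence (order_size G) n sc a k \in tau (corona G n).
Proof.
move=> hreg hp ha hk; have /andP [_ hb] := tau_bounds hreg hp hk.
have hN := order_corona n hreg.
rewrite mem_filter; apply/andP; split.
  move: hk; rewrite mem_filter => /andP [/existsP [f hf] _]; apply/existsP.
  have -> : a = (inord a : 'I_n.+1) :> nat by rewrite inordK.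
  by exists (corona_labeling hreg (inord a) sc f); exact: corona_labeling_em.
rewrite mem_iota /= add0n ltnS; set s := order_size G in hN hb *.
apply: (@leq_trans (3 * (n.+1 * s))); last by rewrite leq_mul2l hN orbT.
rewrite /layer_valence; case: sc; nia.
Qed.

Lemma count_layered_valences (s n : nat) (T S : seq nat) :
  1 <= n -> uniq T -> T != [::] -> {in T, forall k, s + 3 <= k <= 2 * s} ->
  {in T, forall k sc a, a <= n -> layer_valence s n sc a k \in S} ->
  n.+1 * size T + 2 <= size S.
Proof.
move=> hn uT neT bnd inS.
have [k0 hk0] : exists k, k \in T.
  by move: neT; case: (T) => // x ? _; exists x; exact: mem_head.
have ub k : k \in T -> k <= 2 * s by move/bnd/andP => [].
case: (ex_minnP (ex_intro (fun k => k \in T) k0 hk0)) => kmin hkmin hmin.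
case: (ex_maxnP (ex_intro (fun k => k \in T) k0 hk0) ub) => kmax hkmax hmax.
set inter := [seq layer_valence s n true a k | k <- T, a <- iota 0 n.+1].
set extra := [:: layer_valence s n false 0 kmin; layer_valence s n false n kmax].
have <- : size (inter ++ extra) = n.+1 * size T + 2.
  by rewrite size_cat size_allpairs size_iota mulnC.
have mem_inter x : x \in inter ->
    exists k a, [/\ k \in T, a <= n & x = layer_valence s n true a k].
  by case/allpairsP => -[k a] [hk ha ->]; exists k, a; rewrite mem_iota in ha.
apply: uniq_leq_size.
  rewrite cat_uniq; apply/and3P; split.
  - apply: allpairs_uniq => //; first exact: iota_uniq.
    move=> [k a] [k' a'] /allpairsP [[k1 a1] [h1 h2 [-> ->]]].
    move=> /allpairsP [[k2 a2] [h3 h4 [-> ->]]] e.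
    move: h1 h2 h3 h4; rewrite !mem_iota /= !add0n !ltnS => h1 h2 h3 h4.
    have /andP [b1 _] := bnd _ h1; have /andP [b3 _] := bnd _ h3.
    have k1_ge2 : 2 <= k1 by lia.
    have k2_ge2 : 2 <= k2 by lia.
    by have [-> ->] := interleaved_valence_inj (s := s) k1_ge2 k2_ge2 h2 h4 e.
  - apply/hasPn => x; rewrite !inE => /orP [] /eqP ->; apply/negP;
      move/mem_inter => [k [a [hk ha e]]]; have /andP [b1 b2] := bnd _ hk.
    + by have := stacked_valence_below hn (hmin _ hk) b1 ha; rewrite e ltnn.
    + have k3 : 3 <= k by lia.
      by have := stacked_valence_above a hn k3 (hmax _ hk) b2; rewrite e ltnn.
  - rewrite /= inE andbT neq_ltn /layer_valence; have := hmin _ hkmax.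
    by have := bnd _ hkmax; nia.
move=> x; rewrite mem_cat => /orP [/mem_inter [k [a [hk ha ->]]]|]; first exact: inS.
by rewrite !inE => /orP [] /eqP ->; apply: inS.
Qed.

Theorem mainTheorem4 (G : sgraph) (n : nat) :
  0 < #|G| -> regular G 2 -> edge_magic G -> 1 <= n ->
  (n.+1 * size (tau G) + 2 <= size (tau (corona G n)))%N.
Proof.
move=> hp hreg [k0 hk0] hn.
apply: (count_layered_valences (s := order_size G) hn (tau_uniq G)).
- by apply/eqP => hT; have := valence_in_tau hreg hp hk0; rewrite hT.
- by move=> k; exact: tau_bounds.
- by move=> k hk sc a ha; exact: corona_valence_in_tau.
Qed.
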